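(* Let $q>0$, $R>0$. For $(\xi,\eta,\sigma)\in\mathbb{R}^3$ and $\zeta=\xi+i\eta$ let $\Psi=(\psi_1,\psi_2)^T$ solve on $[0,R]$ $$d\psi_1=i(q\psi_2-\zeta\psi_1)\,dx+i\sigma\psi_2\circ dW_x,\qquad d\psi_2=i(q\psi_1+\zeta\psi_2)\,dx+i\sigma\psi_1\circ dW_x,\qquad \Psi(0)=(1,0)^T,$$ and set $F(\xi,\eta,\sigma):=\psi_1(R)$. Suppose $\eta_0\in(0,q)$ is such that $F(0,\eta_0,0)=0$ (i.e. $i\eta_0$ is a discrete eigenvalue of the deterministic problem with potential $q\mathbf{1}_{[0,R]}$). Then the Jacobian determinant $$\det\begin{pmatrix}\partial_\xi\,\mathrm{Re}F&\partial_\eta\,\mathrm{Re}F\\ \partial_\xi\,\mathrm{Im}F&\partial_\eta\,\mathrm{Im}F\end{pmatrix}$$ at the point $(0,\eta_0,0)$ is nonzero. Equivalently, with $c_0=\sqrt{q^2-\eta_0^2}$, $$\Big(\frac{q^2}{c_0^3}+\frac{R\eta_0}{c_0}\Big)\sin(c_0R)-\frac{R\eta_0^2}{c_0^2}\cos(c_0R)\neq0 .$$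
   Context: At $\sigma=0$ the system is deterministic and $\psi_1(R)=\cos(cR)-\frac{i\zeta}{c}\sin(cR)$ with $c=\sqrt{q^2+\zeta^2}$. *)

From Stdlib Require Import Reals.
Open Scope R_scope.

(* The system at sigma = 0 (deterministic Zakharov-Shabat / Dirac system)
     dpsi1/dx = i (q psi2 - zeta psi1),  dpsi2/dx = i (q psi1 + zeta psi2),
   zeta = xi + i eta, written in real coordinates
     psi1 = p1 + i p2,  psi2 = p3 + i p4. *)
Definition zs_solution (q xi eta : R) (p1 p2 p3 p4 : R -> R) : Prop :=
  p1 0 = 1 /\ p2 0 = 0 /\ p3 0 = 0 /\ p4 0 = 0 /\
  forall x : R,
    derivable_pt_lim p1 x (- q * p4 x + xi * p2 x + eta * p1 x) /\
    derivable_pt_lim p2 x (q * p3 x - xi * p1 x + eta * p2 x) /\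
    derivable_pt_lim p3 x (- q * p2 x - xi * p4 x - eta * p3 x) /\
    derivable_pt_lim p4 x (q * p1 x + xi * p3 x - eta * p4 x).

From Stdlib Require Import Reals Lra Psatz.
From Coquelicot Require Import Coquelicot.
Open Scope R_scope.

(* At sigma = 0 the system is the linear Zakharov-Shabat system, whose solution
   is explicit: with c a square root of q^2 + zeta^2,
     psi1(x) = cos(c x) - (i zeta / c) sin(c x),   psi2(x) = (i q / c) sin(c x). *)

Section ComplexTrigonometry.
Variables a b : R.

(* cos (c x) = cos_re x + i cos_im x  and  sin (c x) / c = sinc_re x + i sinc_im x. *)
Definition cos_re (x : R) : R := cos (a*x) * cosh (b*x).
Definition cos_im (x : R) : R := - (sin (a*x) * sinh (b*x)).
Definition sinc_re (x : R) : R :=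
  (a * sin (a*x) * cosh (b*x) + b * cos (a*x) * sinh (b*x)) / (a*a + b*b).
Definition sinc_im (x : R) : R :=
  (a * cos (a*x) * sinh (b*x) - b * sin (a*x) * cosh (b*x)) / (a*a + b*b).

Lemma complex_trig_at_0 :
  cos_re 0 = 1 /\ cos_im 0 = 0 /\ sinc_re 0 = 0 /\ sinc_im 0 = 0.
Proof.
  unfold cos_re, cos_im, sinc_re, sinc_im, cosh, sinh.
  rewrite !Rmult_0_r, cos_0, sin_0, Ropp_0, exp_0.
  repeat split; [field | unfold Rdiv; ring ..].
Qed.

Hypothesis c_nonzero : a*a + b*b <> 0.

Lemma sinc_re_deriv (x : R) : is_derive sinc_re x (cos_re x).
Proof. unfold sinc_re, cos_re, cosh, sinh. auto_derive; [exact I | field; exact c_nonzero]. Qed.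

Lemma sinc_im_deriv (x : R) : is_derive sinc_im x (cos_im x).
Proof. unfold sinc_im, cos_im, cosh, sinh. auto_derive; [exact I | field; exact c_nonzero]. Qed.

(* u + i v = c^2; then (cos (c x))' = - c^2 (sin (c x) / c). *)
Variables u v : R.
Hypotheses (square_re : u = a*a - b*b) (square_im : v = 2*a*b).

Lemma cos_re_deriv (x : R) : is_derive cos_re x (- (u * sinc_re x - v * sinc_im x)).
Proof.
  subst u v. unfold sinc_re, sinc_im, cos_re, cosh, sinh.
  auto_derive; [exact I | field; exact c_nonzero].
Qed.

Lemma cos_im_deriv (x : R) : is_derive cos_im x (- (u * sinc_im x + v * sinc_re x)).
Proof.
  subst u v. unfold sinc_re, sinc_im, cos_im, cosh, sinh.
  auto_derive; [exact I | field; exact c_nonzero].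
Qed.

End ComplexTrigonometry.

(* Coquelicot's automatic differentiation produces eta-expanded [Derive] terms. *)
Lemma Derive_eta (f : R -> R) (x l : R) :
  is_derive f x l -> Derive (fun y => f y) x = l.
Proof. exact (is_derive_unique f x l). Qed.

(* psi1 = cos (c x) - i zeta sin (c x) / c and psi2 = i q sin (c x) / c, zeta = xi + i eta. *)
Definition psi1_re (xi eta a b x : R) : R :=
  cos_re a b x + eta * sinc_re a b x + xi * sinc_im a b x.
Definition psi1_im (xi eta a b x : R) : R :=
  cos_im a b x + eta * sinc_im a b x - xi * sinc_re a b x.
Definition psi2_re (q a b x : R) : R := - (q * sinc_im a b x).
Definition psi2_im (q a b x : R) : R := q * sinc_re a b x.

(* If c^2 = q^2 + zeta^2 (real part: a^2 - b^2, imaginary part: 2 a b), the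
   closed form solves the Zakharov-Shabat system with the right initial data. *)
Lemma closed_form_solution (q xi eta a b : R) :
  a*a + b*b <> 0 -> a*a - b*b = q*q + xi*xi - eta*eta -> a*b = xi*eta ->
  zs_solution q xi eta (psi1_re xi eta a b) (psi1_im xi eta a b)
    (psi2_re q a b) (psi2_im q a b).
Proof.
  intros Hc Hre Him.
  set (u := q*q + xi*xi - eta*eta). set (v := 2*xi*eta).
  assert (Hu : u = a*a - b*b) by (unfold u; lra).
  assert (Hv : v = 2*a*b) by (unfold v; nra).
  destruct (complex_trig_at_0 a b) as [C0 [S0 [T0 U0]]].
  unfold psi1_re, psi1_im, psi2_re, psi2_im.
  pose proof (cos_re_deriv a b Hc u v Hu Hv) as Dc.
  pose proof (cos_im_deriv a b Hc u v Hu Hv) as Dci.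
  pose proof (sinc_re_deriv a b Hc) as Ds.
  pose proof (sinc_im_deriv a b Hc) as Dsi.
  repeat split; try (rewrite ?C0, ?S0, ?T0, ?U0; ring);
    apply is_derive_Reals; auto_derive;
    try (repeat split; eexists; eauto; fail);
    rewrite ?(Derive_eta _ _ _ (Dc x)), ?(Derive_eta _ _ _ (Dci x)),
      ?(Derive_eta _ _ _ (Ds x)), ?(Derive_eta _ _ _ (Dsi x));
    unfold u, v; ring.
Qed.

Definition zs_flow (q xi eta : R) (d1 d2 d3 d4 : R -> R) : Prop :=
  forall x : R,
    derivable_pt_lim d1 x (- q * d4 x + xi * d2 x + eta * d1 x) /\
    derivable_pt_lim d2 x (q * d3 x - xi * d1 x + eta * d2 x) /\
    derivable_pt_lim d3 x (- q * d2 x - xi * d4 x - eta * d3 x) /\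
    derivable_pt_lim d4 x (q * d1 x + xi * d3 x - eta * d4 x).

Lemma zs_flow_sub (q xi eta : R) (p1 p2 p3 p4 r1 r2 r3 r4 : R -> R) :
  zs_flow q xi eta p1 p2 p3 p4 -> zs_flow q xi eta r1 r2 r3 r4 ->
  zs_flow q xi eta (fun x => p1 x - r1 x) (fun x => p2 x - r2 x)
    (fun x => p3 x - r3 x) (fun x => p4 x - r4 x).
Proof.
  intros Hp Hr x.
  destruct (Hp x) as [P1 [P2 [P3 P4]]]; destruct (Hr x) as [Q1 [Q2 [Q3 Q4]]].
  apply is_derive_Reals in P1, P2, P3, P4, Q1, Q2, Q3, Q4.
  repeat split; apply is_derive_Reals; auto_derive;
    try (repeat split; eexists; eassumption);
    rewrite ?(Derive_eta _ _ _ P1), ?(Derive_eta _ _ _ P2), ?(Derive_eta _ _ _ P3),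
      ?(Derive_eta _ _ _ P4), ?(Derive_eta _ _ _ Q1), ?(Derive_eta _ _ _ Q2),
      ?(Derive_eta _ _ _ Q3), ?(Derive_eta _ _ _ Q4); ring.
Qed.

Lemma nonpos_derivative_nonincreasing (f df : R -> R) :
  (forall t, derivable_pt_lim f t (df t)) -> (forall t, df t <= 0) ->
  forall x y, x <= y -> f y <= f x.
Proof.
  intros Df Hneg x y Hxy.
  destruct (Req_dec x y) as [<- | Hne]; [lra |].
  destruct (MVT_cor2 f df x y) as [c [Hc _]]; [lra | intros; apply Df |].
  pose proof (Hneg c). nra.
Qed.

(* Squared modulus of (psi1, psi2), damped so that it cannot grow. *)
Definition zs_energy (eta : R) (d1 d2 d3 d4 : R -> R) (t : R) : R :=
  (d1 t ^ 2 + d2 t ^ 2 + d3 t ^ 2 + d4 t ^ 2) * exp (- ((eta*eta + 1) * t)).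

(* The antisymmetric q- and xi-terms drop out of the energy derivative, which is
   exp(-K t) (2 eta (|psi1|^2 - |psi2|^2) - K (|psi1|^2 + |psi2|^2)) <= 0. *)
Lemma zs_energy_nonincreasing (q xi eta : R) (d1 d2 d3 d4 : R -> R) :
  zs_flow q xi eta d1 d2 d3 d4 ->
  forall x y, x <= y -> zs_energy eta d1 d2 d3 d4 y <= zs_energy eta d1 d2 d3 d4 x.
Proof.
  intros Hd.
  apply nonpos_derivative_nonincreasing with (fun t =>
    - exp (- ((eta*eta + 1) * t)) *
      ((eta - 1)^2 * (d1 t ^ 2 + d2 t ^ 2) + (eta + 1)^2 * (d3 t ^ 2 + d4 t ^ 2))).
  - intro t. destruct (Hd t) as [D1 [D2 [D3 D4]]].
    apply is_derive_Reals in D1, D2, D3, D4.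
    apply is_derive_Reals. unfold zs_energy. auto_derive.
    + repeat split; eexists; eassumption.
    + rewrite (Derive_eta _ _ _ D1), (Derive_eta _ _ _ D2),
        (Derive_eta _ _ _ D3), (Derive_eta _ _ _ D4). ring.
  - intro t. pose proof (exp_pos (- ((eta*eta + 1) * t))).
    pose proof (pow2_ge_0 (d1 t)). pose proof (pow2_ge_0 (d2 t)).
    pose proof (pow2_ge_0 (d3 t)). pose proof (pow2_ge_0 (d4 t)).
    pose proof (pow2_ge_0 (eta - 1)). pose proof (pow2_ge_0 (eta + 1)).
    assert (0 <= (eta - 1)^2 * (d1 t ^ 2 + d2 t ^ 2) + (eta + 1)^2 * (d3 t ^ 2 + d4 t ^ 2))
      by nra.
    nra.
Qed.

Lemma zs_flow_zero (q xi eta : R) (d1 d2 d3 d4 : R -> R) :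
  zs_flow q xi eta d1 d2 d3 d4 ->
  d1 0 = 0 -> d2 0 = 0 -> d3 0 = 0 -> d4 0 = 0 ->
  forall x, 0 <= x -> d1 x = 0 /\ d2 x = 0 /\ d3 x = 0 /\ d4 x = 0.
Proof.
  intros Hd Z1 Z2 Z3 Z4 x Hx.
  pose proof (zs_energy_nonincreasing q xi eta d1 d2 d3 d4 Hd 0 x Hx) as Hdecay.
  unfold zs_energy in Hdecay. rewrite Z1, Z2, Z3, Z4 in Hdecay.
  pose proof (exp_pos (- ((eta*eta + 1) * x))).
  pose proof (pow2_ge_0 (d1 x)). pose proof (pow2_ge_0 (d2 x)).
  pose proof (pow2_ge_0 (d3 x)). pose proof (pow2_ge_0 (d4 x)).
  assert (Hsum : d1 x ^ 2 + d2 x ^ 2 + d3 x ^ 2 + d4 x ^ 2 <= 0) by nra.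
  repeat split; nra.
Qed.

Lemma zs_unique (q xi eta : R) (p1 p2 p3 p4 r1 r2 r3 r4 : R -> R) :
  zs_solution q xi eta p1 p2 p3 p4 -> zs_solution q xi eta r1 r2 r3 r4 ->
  forall x, 0 <= x -> p1 x = r1 x /\ p2 x = r2 x.
Proof.
  intros [P1 [P2 [P3 [P4 Hp]]]] [Q1 [Q2 [Q3 [Q4 Hr]]]] x Hx.
  destruct (zs_flow_zero q xi eta _ _ _ _ (zs_flow_sub q xi eta _ _ _ _ _ _ _ _ Hp Hr))
    with x as [E1 [E2 _]]; lra.
Qed.

(* Principal square root of A + i B (A > 0) in real coordinates. *)
Definition csqrt_re (A B : R) : R := sqrt ((sqrt (A*A + B*B) + A) / 2).
Definition csqrt_im (A B : R) : R := B / (2 * csqrt_re A B).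

Lemma csqrt_spec (A B : R) : 0 < A ->
  0 < csqrt_re A B /\
  csqrt_re A B * csqrt_re A B - csqrt_im A B * csqrt_im A B = A /\
  2 * csqrt_re A B * csqrt_im A B = B.
Proof.
  intros HA.
  assert (Hr : sqrt (A*A + B*B) * sqrt (A*A + B*B) = A*A + B*B)
    by (apply sqrt_sqrt; nra).
  pose proof (sqrt_pos (A*A + B*B)).
  assert (Hpos : 0 < csqrt_re A B) by (apply sqrt_lt_R0; lra).
  assert (Hsq : csqrt_re A B * csqrt_re A B = (sqrt (A*A + B*B) + A) / 2)
    by (apply sqrt_sqrt; lra).
  unfold csqrt_im. split; [exact Hpos | split; [| field; lra]].
  set (a := csqrt_re A B) in *. set (r := sqrt (A*A + B*B)) in *.
  apply (Rmult_eq_reg_r (4 * (a * a))); [| nra].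
  transitivity (4 * ((a*a) * (a*a)) - B*B); [field; lra |].
  rewrite Hsq. nra.
Qed.

(* c(xi, eta): the square root of q^2 + zeta^2 = (q^2 - eta^2 + xi^2) + 2 i xi eta. *)
Definition root_re (q eta xi : R) : R := csqrt_re (q*q - eta*eta + xi*xi) (2*xi*eta).
Definition root_im (q eta xi : R) : R := csqrt_im (q*q - eta*eta + xi*xi) (2*xi*eta).

Lemma solution_closed_form (q xi eta : R) (p1 p2 p3 p4 : R -> R) :
  eta * eta < q * q -> zs_solution q xi eta p1 p2 p3 p4 ->
  forall x, 0 <= x ->
    p1 x = psi1_re xi eta (root_re q eta xi) (root_im q eta xi) x /\
    p2 x = psi1_im xi eta (root_re q eta xi) (root_im q eta xi) x.
Proof.
  intros Heta Hsol.
  destruct (csqrt_spec (q*q - eta*eta + xi*xi) (2*xi*eta)) as [Hpos [Hre Him]]; [nra |].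
  fold (root_re q eta xi) (root_im q eta xi) in *.
  assert (Hc : root_re q eta xi * root_re q eta xi + root_im q eta xi * root_im q eta xi <> 0)
    by (apply Rgt_not_eq; nra).
  eapply (zs_unique q xi eta _ _ _ _ _ _ _ _ Hsol).
  apply closed_form_solution; [exact Hc | lra | lra].
Qed.

Definition axis_psi1 (q eta x : R) : R :=
  cos (sqrt (q*q - eta*eta) * x) + eta * sin (sqrt (q*q - eta*eta) * x) / sqrt (q*q - eta*eta).

Lemma root_on_axis (q eta : R) : eta * eta < q * q ->
  root_re q eta 0 = sqrt (q*q - eta*eta) /\ root_im q eta 0 = 0.
Proof.
  intros Heta. unfold root_re, root_im, csqrt_im, csqrt_re.
  rewrite !Rmult_0_r, !Rmult_0_l, !Rplus_0_r, sqrt_square by nra.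
  split; [f_equal; field | unfold Rdiv; ring].
Qed.

Lemma closed_form_on_axis (q eta x : R) : eta * eta < q * q ->
  psi1_re 0 eta (root_re q eta 0) (root_im q eta 0) x = axis_psi1 q eta x /\
  psi1_im 0 eta (root_re q eta 0) (root_im q eta 0) x = 0.
Proof.
  intros Heta. destruct (root_on_axis q eta Heta) as [-> ->].
  assert (Hc : 0 < sqrt (q*q - eta*eta)) by (apply sqrt_lt_R0; lra).
  unfold psi1_re, psi1_im, cos_re, cos_im, sinc_re, sinc_im, axis_psi1.
  rewrite !Rmult_0_l, cosh_0, sinh_0.
  split; field; lra.
Qed.

Lemma solution_on_axis (q eta : R) (p1 p2 p3 p4 : R -> R) :
  eta * eta < q * q -> zs_solution q 0 eta p1 p2 p3 p4 ->
  forall x, 0 <= x -> p1 x = axis_psi1 q eta x /\ p2 x = 0.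
Proof.
  intros Heta Hsol x Hx.
  destruct (solution_closed_form q 0 eta p1 p2 p3 p4 Heta Hsol x Hx) as [E1 E2].
  destruct (closed_form_on_axis q eta x Heta) as [A1 A2].
  split; congruence.
Qed.

Lemma root_re_deriv (q eta : R) : eta * eta < q * q -> is_derive (root_re q eta) 0 0.
Proof.
  intros Heta. unfold root_re, csqrt_re. auto_derive.
  - rewrite !Rmult_0_r, !Rmult_0_l, !Rplus_0_r.
    pose proof (sqrt_pos ((q*q - eta*eta) * (q*q - eta*eta))).
    repeat split; try nra.
  - ring.
Qed.

Lemma root_im_deriv (q eta : R) : eta * eta < q * q ->
  is_derive (root_im q eta) 0 (eta / sqrt (q*q - eta*eta)).
Proof.
  intros Heta. destruct (root_on_axis q eta Heta) as [Hre0 _].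
  assert (Hc : 0 < sqrt (q*q - eta*eta)) by (apply sqrt_lt_R0; lra).
  pose proof (root_re_deriv q eta Heta) as Dre.
  change (is_derive (fun xi => 2 * xi * eta / (2 * root_re q eta xi)) 0
            (eta / sqrt (q*q - eta*eta))).
  auto_derive.
  - split; [eexists; exact Dre | split; [| exact I]].
    rewrite Hre0. lra.
  - rewrite (Derive_eta _ _ _ Dre), Hre0. field. lra.
Qed.

Definition eigen_slope (q eta R0 : R) : R :=
  let c := sqrt (q*q - eta*eta) in
  (q*q / (c*c*c) + R0*eta / c) * sin (c*R0) - R0*eta*eta / (c*c) * cos (c*R0).

Lemma axis_psi1_deriv (q eta R0 : R) : eta * eta < q * q ->
  is_derive (fun e => axis_psi1 q e R0) eta (eigen_slope q eta R0).
Proof.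
  intros Heta.
  assert (Hp : 0 < q*q - eta*eta) by lra.
  pose proof (sqrt_lt_R0 _ Hp) as Hc.
  pose proof (sqrt_sqrt _ (Rlt_le _ _ Hp)) as Hcc.
  unfold axis_psi1, eigen_slope. auto_derive.
  - change (q*q + - (eta*eta)) with (q*q - eta*eta). repeat split; lra.
  - change (q*q + - (eta*eta)) with (q*q - eta*eta).
    set (c := sqrt (q*q - eta*eta)) in *.
    replace (q*q) with (c*c + eta*eta) by lra. field. lra.
Qed.

(* Cauchy-Riemann: d_xi Im F = - d_eta Re F on the imaginary axis. *)
Lemma psi1_im_deriv_xi (q eta R0 : R) : eta * eta < q * q ->
  is_derive (fun xi => psi1_im xi eta (root_re q eta xi) (root_im q eta xi) R0) 0
    (- eigen_slope q eta R0).
Proof.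
  intros Heta.
  destruct (root_on_axis q eta Heta) as [Hre0 Him0].
  pose proof (root_re_deriv q eta Heta) as Dre.
  pose proof (root_im_deriv q eta Heta) as Dim.
  assert (Hp : 0 < q*q - eta*eta) by lra.
  pose proof (sqrt_lt_R0 _ Hp) as Hc.
  pose proof (sqrt_sqrt _ (Rlt_le _ _ Hp)) as Hcc.
  unfold psi1_im, cos_im, sinc_re, sinc_im, eigen_slope, cosh, sinh. auto_derive.
  - rewrite Hre0, Him0. repeat split; try (eexists; eassumption); nra.
  - rewrite (Derive_eta _ _ _ Dre), (Derive_eta _ _ _ Dim), Hre0, Him0.
    set (c := sqrt (q*q - eta*eta)) in *.
    rewrite !Rmult_0_l, !Rmult_0_r, Ropp_0, exp_0.
    replace (q*q) with (c*c + eta*eta) by lra. field. lra.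
Qed.

(* d_xi Re F exists (its value is irrelevant, since d_eta Im F = 0). *)
Lemma psi1_re_derivable_xi (q eta R0 : R) : eta * eta < q * q ->
  ex_derive (fun xi => psi1_re xi eta (root_re q eta xi) (root_im q eta xi) R0) 0.
Proof.
  intros Heta.
  destruct (root_on_axis q eta Heta) as [Hre0 Him0].
  pose proof (root_re_deriv q eta Heta) as Dre.
  pose proof (root_im_deriv q eta Heta) as Dim.
  assert (Hc : 0 < sqrt (q*q - eta*eta)) by (apply sqrt_lt_R0; lra).
  unfold psi1_re, cos_re, sinc_re, sinc_im, cosh, sinh. auto_derive.
  rewrite Hre0, Him0. repeat split; try (eexists; eassumption); nra.
Qed.

(* At an eigenvalue cos (c R) = - eta sin (c R) / c, so sin (c R) <> 0 and the slope
   simplifies to sin (c R) q^2 (1 + R eta) / c^3 <> 0. *)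
Lemma eigen_slope_nonzero (q eta R0 : R) :
  0 < eta -> 0 < R0 -> eta * eta < q * q -> axis_psi1 q eta R0 = 0 ->
  eigen_slope q eta R0 <> 0.
Proof.
  intros Heta HR Hq Heig.
  assert (Hp : 0 < q*q - eta*eta) by lra.
  pose proof (sqrt_lt_R0 _ Hp) as Hc.
  pose proof (sqrt_sqrt _ (Rlt_le _ _ Hp)) as Hcc.
  unfold axis_psi1, eigen_slope in *. set (c := sqrt (q*q - eta*eta)) in *.
  assert (Hcos : cos (c*R0) = - (eta * sin (c*R0) / c))
    by (apply (Rplus_eq_reg_r (eta * sin (c*R0) / c)); lra).
  assert (Hsin : sin (c*R0) <> 0).
  { intro Z. pose proof (sin2_cos2 (c*R0)) as P.
    rewrite Hcos, Z in P. unfold Rsqr in P. field_simplify in P; lra. }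
  replace ((q*q / (c*c*c) + R0*eta/c) * sin (c*R0) - R0*eta*eta / (c*c) * cos (c*R0))
    with (sin (c*R0) * (q*q * (1 + R0*eta) / (c*c*c)))
    by (rewrite Hcos; replace (q*q) with (c*c + eta*eta) by lra; field; lra).
  apply Rmult_integral_contrapositive_currified; [exact Hsin |].
  apply Rgt_not_eq. apply Rdiv_lt_0_compat; apply Rmult_lt_0_compat; nra.
Qed.

Theorem mainTheorem6 (q R0 eta0 : R) (p1 p2 p3 p4 : R -> R -> R -> R) :
  0 < q -> 0 < R0 -> 0 < eta0 < q ->
  (forall xi eta : R,
     zs_solution q xi eta (p1 xi eta) (p2 xi eta) (p3 xi eta) (p4 xi eta)) ->
  p1 0 eta0 R0 = 0 -> p2 0 eta0 R0 = 0 ->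
  exists a b c d : R,
    derivable_pt_lim (fun xi => p1 xi eta0 R0) 0 a /\
    derivable_pt_lim (fun eta => p1 0 eta R0) eta0 b /\
    derivable_pt_lim (fun xi => p2 xi eta0 R0) 0 c /\
    derivable_pt_lim (fun eta => p2 0 eta R0) eta0 d /\
    a * d - b * c <> 0.
Proof.
  intros Hq HR He Hsol HF1 _.
  assert (Heta0 : eta0 * eta0 < q * q) by nra.
  assert (Hline : forall xi,
     p1 xi eta0 R0 = psi1_re xi eta0 (root_re q eta0 xi) (root_im q eta0 xi) R0 /\
     p2 xi eta0 R0 = psi1_im xi eta0 (root_re q eta0 xi) (root_im q eta0 xi) R0)
    by (intro xi; apply (solution_closed_form q xi eta0 _ _ _ _ Heta0 (Hsol xi eta0)); lra).
  assert (Haxis : locally eta0 (fun eta => p1 0 eta R0 = axis_psi1 q eta R0 /\ p2 0 eta R0 = 0)).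
  { apply (filter_imp (fun eta => -q < eta < q)).
    - intros eta Heta. apply (solution_on_axis q eta _ _ _ _ ltac:(nra) (Hsol 0 eta)); lra.
    - apply (open_and (fun eta => -q < eta) (fun eta => eta < q));
        [apply open_gt | apply open_lt | lra]. }
  (* The Jacobian matrix is [[_, b], [-b, 0]] with b = d_eta Re F. *)
  set (b := eigen_slope q eta0 R0).
  exists (Derive (fun xi => psi1_re xi eta0 (root_re q eta0 xi) (root_im q eta0 xi) R0) 0),
    b, (- b), 0.
  repeat split; try apply is_derive_Reals.
  - apply (is_derive_ext (fun xi => psi1_re xi eta0 (root_re q eta0 xi) (root_im q eta0 xi) R0));
      [intro xi; symmetry; apply Hline |].
    apply Derive_correct, psi1_re_derivable_xi, Heta0.
  - apply (is_derive_ext_loc (fun eta => axis_psi1 q eta R0));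
      [apply (filter_imp _ _ (fun eta H => eq_sym (proj1 H)) Haxis) |].
    apply axis_psi1_deriv, Heta0.
  - apply (is_derive_ext (fun xi => psi1_im xi eta0 (root_re q eta0 xi) (root_im q eta0 xi) R0));
      [intro xi; symmetry; apply Hline |].
    apply psi1_im_deriv_xi, Heta0.
  - apply (is_derive_ext_loc (fun _ => 0));
      [apply (filter_imp _ _ (fun eta H => eq_sym (proj2 H)) Haxis) |].
    apply (is_derive_const 0).
  - assert (Hb : b <> 0).
    { apply eigen_slope_nonzero; try lra.
      rewrite <- HF1. symmetry. apply (solution_on_axis q eta0 _ _ _ _ Heta0 (Hsol 0 eta0)); lra. }
    replace (_ * 0 - b * - b) with (b * b) by ring.
    apply Rmult_integral_contrapositive_currified; exact Hb.
Qed.
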